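(* Let $G$ be a graph of maximum degree at most $3$. Then $G$ has a matching $M$ such that the multigraph $G/M$ obtained by contracting all edges of $M$ (keeping parallel edges) is bipartite. *)

From mathcomp Require Import all_boot.
Set Implicit Arguments. Unset Strict Implicit. Unset Printing Implicit Defensive.

Section Graphs.
Variable T : finType.

Definition simple_graph (e : rel T) : Prop := symmetric e /\ irreflexive e.

Definition nbhd (e : rel T) (x : T) : {set T} := [set y | e x y].
Definition max_degree_le (e : rel T) (k : nat) : Prop :=
  forall x, #|nbhd e x| <= k.

Definition is_edge (e : rel T) (S : {set T}) : Prop :=
  exists u v, e u v /\ S = [set u; v].

Definition is_matching (e : rel T) (M : {set {set T}}) : Prop :=
  (forall S, S \in M -> is_edge e S) /\
  (forall S1 S2, S1 \in M -> S2 \in M -> S1 != S2 -> [disjoint S1 & S2]).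

(* vertex of G/M containing x: x together with everything joined to x by
   an edge of M (for a matching this is the M-contraction class of x) *)
Definition blk (M : {set {set T}}) (x : T) : {set T} :=
  x |: \bigcup_(S in M | x \in S) S.

(* G/M is the multigraph whose vertices are the classes blk M x and which has,
   for every edge uv of G not in M, an edge between blk M u and blk M v
   (parallel edges kept; an edge with blk M u = blk M v would be a loop).
   G/M is bipartite iff its vertices can be 2-coloured so that every edge
   has differently coloured ends (a loop makes this impossible). *)
Definition contraction_bipartite (e : rel T) (M : {set {set T}}) : Prop :=
  exists col : {set T} -> bool,
    forall u v, e u v -> [set u; v] \notin M -> col (blk M u) != col (blk M v).

End Graphs.

(* Choose a side A of a vertex 2-colouring minimising the number of
   monochromatic edges.  Recolouring a vertex x flips exactly the edges at x,
   so at a minimum x has at most as many same-side as other-side neighbours;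
   with degree at most 3 this leaves at most one same-side neighbour.  Hence
   the monochromatic edges form a matching M, each class of G/M lies on one
   side, and every edge of G outside M joins the two sides. *)
From mathcomp Require Import all_boot.
From mathcomp Require Import zify.
Set Implicit Arguments. Unset Strict Implicit.

Section Matchings.
Variables (T : finType) (f : rel T).
Hypothesis fsym : symmetric f.
Hypothesis f_functional : forall x y z, f x y -> f x z -> y = z.

Definition matching_of : {set {set T}} :=
  [set S | [exists u, exists v, f u v && (S == [set u; v])]].

Lemma matching_ofP S :
  reflect (exists u v, f u v /\ S = [set u; v]) (S \in matching_of).
Proof.
rewrite inE; apply: (iffP existsP).
  by move=> [u /existsP [v /andP [fuv /eqP ->]]]; exists u, v.
by move=> [u [v [fuv ->]]]; exists u; apply/existsP; exists v; rewrite fuv eqxx.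
Qed.

Lemma matching_of_mem S w : S \in matching_of -> w \in S ->
  exists p, f w p /\ S = [set w; p].
Proof.
move=> /matching_ofP [u [v [fuv ->]]]; rewrite !inE => /orP [/eqP ->|/eqP ->].
  by exists v.
by exists u; rewrite fsym setUC.
Qed.

Lemma is_matching_of (e : rel T) : subrel f e -> is_matching e matching_of.
Proof.
move=> fe; split.
  by move=> S /matching_ofP [u [v [fuv ->]]]; exists u, v; split; first exact: fe.
move=> S1 S2 S1M S2M; apply: contraR; rewrite -setI_eq0 => /set0Pn [w].
rewrite inE => /andP [wS1 wS2].
have [p [fwp ->]] := matching_of_mem S1M wS1.
have [q [fwq ->]] := matching_of_mem S2M wS2.
by rewrite (f_functional fwp fwq).
Qed.

Lemma mem_blk_matching_of u y : y \in blk matching_of u -> y = u \/ f u y.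
Proof.
rewrite /blk !inE => /orP [/eqP ->|/bigcupP [S /andP [SM uS] yS]]; first by left.
have [p [fup E]] := matching_of_mem SM uS.
by move: yS; rewrite E !inE => /orP [] /eqP ->; [left | right].
Qed.

End Matchings.

Section Recolouring.
Variables (T : finType) (e : rel T).
Hypotheses (esym : symmetric e) (eirr : irreflexive e).

Definition monochromatic (A : {set T}) (u v : T) : bool :=
  e u v && ((u \in A) == (v \in A)).

(* Each monochromatic edge is counted twice, once per orientation. *)
Definition monochromatic_count (A : {set T}) : nat :=
  \sum_u \sum_v monochromatic A u v.

Definition degree (x : T) : nat := \sum_v e x v.

Lemma degree_card_nbhd x : degree x = #|nbhd e x|.
Proof.
by rewrite /degree -sum1_card [RHS]big_mkcond; apply: eq_bigr => v _; rewrite inE.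
Qed.

Definition same_side_degree (A : {set T}) (x : T) : nat :=
  \sum_v monochromatic A x v.

Definition recolour (A : {set T}) (x : T) : {set T} :=
  if x \in A then A :\ x else x |: A.

Lemma in_recolour A x v : (v \in recolour A x) = (v \in A) (+) (v == x).
Proof.
rewrite /recolour; have [->|vx] := eqVneq v x.
  by case: ifP => xA; rewrite !inE eqxx xA.
by case: ifP; rewrite !inE ?vx ?(negbTE vx) ?addbF.
Qed.

Lemma monochromatic_sym A : symmetric (monochromatic A).
Proof. by move=> u v; rewrite /monochromatic esym eq_sym. Qed.

Lemma monochromatic_irr A : irreflexive (monochromatic A).
Proof. by move=> u; rewrite /monochromatic eirr. Qed.

Lemma sum_incident (g : rel T) x : symmetric g -> irreflexive g ->
  \sum_u \sum_v (((u == x) (+) (v == x)) && g u v) = 2 * \sum_v g x v.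
Proof.
move=> gsym girr.
have split_pair u v : (((u == x) (+) (v == x)) && g u v : nat)
    = ((u == x) && g u v) + ((v == x) && g v u).
  have [->|ux] := eqVneq u x; have [->|vx] := eqVneq v x => //=.
  - by rewrite girr.
  - by rewrite addn0.
  - by rewrite gsym.
have row_x (h : rel T) : \sum_u \sum_v ((u == x) && h u v) = \sum_v h x v.
  rewrite (bigD1 x) //= [X in _ + X]big1 ?addn0 => [|w wx]; last first.
    by apply: big1 => v _; rewrite (negbTE wx).
  by apply: eq_bigr => v _; rewrite eqxx.
rewrite (eq_bigr (fun u => \sum_v ((u == x) && g u v) + \sum_v ((v == x) && g v u))).
  by rewrite big_split /= [X in _ + X]exchange_big /= !row_x addnn mul2n.
by move=> u _; rewrite -big_split; apply: eq_bigr => v _; rewrite split_pair.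
Qed.

Lemma monochromatic_count_recolour A x :
  monochromatic_count (recolour A x) + 4 * same_side_degree A x
  = monochromatic_count A + 2 * degree x.
Proof.
have pointwise u v : monochromatic (recolour A x) u v
    + 2 * (((u == x) (+) (v == x)) && monochromatic A u v)
    = monochromatic A u v + (((u == x) (+) (v == x)) && e u v).
  rewrite /monochromatic !in_recolour.
  by case: (u == x); case: (v == x); case: (u \in A); case: (v \in A);
    case: (e u v).
have := sum_incident x (monochromatic_sym A) (monochromatic_irr A).
have := sum_incident x esym eirr.
rewrite /same_side_degree /degree /monochromatic_count => <-.
rewrite -[4]/(2 * 2) -mulnA => <-.
rewrite !big_distrr -!big_split /=; apply: eq_bigr => u _.
rewrite !big_distrr -!big_split /=; apply: eq_bigr => v _.
exact: pointwise.
Qed.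

Lemma same_side_degree_min A x :
  (forall B, monochromatic_count A <= monochromatic_count B) ->
  degree x <= 3 -> same_side_degree A x <= 1.
Proof.
move=> Amin degx; have := monochromatic_count_recolour A x.
have := Amin (recolour A x); lia.
Qed.

Lemma monochromatic_functional A :
  (forall x, same_side_degree A x <= 1) ->
  forall x y z, monochromatic A x y -> monochromatic A x z -> y = z.
Proof.
move=> same_le1 x y z xy xz; apply/eqP; apply: contraT => yz.
have := same_le1 x; rewrite /same_side_degree (bigD1 y) // (bigD1 z) /=.
  by rewrite xy xz.
by rewrite eq_sym yz.
Qed.

Lemma contraction_bipartite_monochromatic A :
  contraction_bipartite e (matching_of (monochromatic A)).
Proof.
set M := matching_of _.
exists (fun S : {set T} => [exists y in S, y \in A]).
have side_blk u : [exists y in blk M u, y \in A] = (u \in A).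
  apply/existsP/idP => [[y /andP [yu yA]]|uA]; last first.
    by exists u; rewrite /blk !inE eqxx.
  move: yA; case: (mem_blk_matching_of (monochromatic_sym A) yu) => [-> //|].
  by case/andP=> _ /eqP ->.
move=> u v euv uvM; rewrite !side_blk; apply: contra uvM => /eqP same.
by apply/matching_ofP; exists u, v; rewrite /monochromatic euv same eqxx.
Qed.

End Recolouring.

Theorem mainTheorem6 (T : finType) (e : rel T) :
  simple_graph e -> max_degree_le e 3 ->
  exists M : {set {set T}}, is_matching e M /\ contraction_bipartite e M.
Proof.
move=> [esym eirr] deg3.
have [A _ Amin] := @arg_minnP {set T} set0 predT (monochromatic_count e) isT.
have same_le1 x : same_side_degree e A x <= 1.
  by apply: (same_side_degree_min esym eirr) => [B|]; rewrite ?Amin ?degree_card_nbhd.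
exists (matching_of (monochromatic e A)); split.
  apply: (is_matching_of (monochromatic_sym esym A)) => [x y z|u v /andP []//].
  exact: monochromatic_functional.
exact: contraction_bipartite_monochromatic.
Qed.
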